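(* Let $F$ be a 3-SAT formula over variables $x_1,\dots,x_p$ with clauses $C_1,\dots,C_c$, and $A$ a partial assignment on $x_1,\dots,x_p$. Let $$X = \begin{bmatrix} 0 & 1 & 1\\ E(C_1) & 0 & 1\\ \vdots&\vdots&\vdots\\ E(C_c) & 0 & 1\\ E(A) & 0 & 1\end{bmatrix}\in\mathbb{R}^{(c+2)\times(2p+2)}$$ (the first row has the zero vector in its first $2p$ entries). Then there exist: (i) a saturated attention head with parameters $\Gamma_s^{A\models F}$ and output dimension $1$ such that $\operatorname{SaturatedAttn}(X;\Gamma_s^{A\models F})_{c+2} = \mathbf{1}_{A\models F}$; (ii) a saturated attention head with parameters $\Gamma_s^{F\models\lnot A}$ and output dimension $1$ such that $\operatorname{SaturatedAttn}(X;\Gamma_s^{F\models\lnot A})_{c+2} = \mathbf{1}_{F\models\lnot A}$; (iii) a saturated attention head with parameters $\Gamma_s^{D}$ and output dimension $2p$, and an MLP layer with ReGLU activation and parameters $\Gamma^D_{MLP}$, such that $\operatorname{MLP}\big([\operatorname{SaturatedAttn}(X;\Gamma_s^D);X];\Gamma^D_{MLP}\big)_{c+2} = E(D)$ whenever $F\not\models\lnot A$, where $D=\{\ell\in L\mid F\land A\models_1\ell\}$. The parameters depend only on $p$ and $c$, not on $F$ or $A$.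
   Context: Literals $L = \{x_1,\lnot x_1,\dots,x_p,\lnot x_p\}$; clauses and partial assignments are subsets of $L$ not containing both $x_v$ and $\lnot x_v$; a clause is the disjunction of its literals and a partial assignment sets $x_v$ true if $x_v\in A$, false if $\lnot x_v\in A$. $E(B)\in\{0,1\}^{2p}$ has $E(B)_v = \mathbf{1}_{x_v\in B}$, $E(B)_{v+p} = \mathbf{1}_{\lnot x_v\in B}$. $A\models F$: every clause contains a literal of $A$. $F\models\lnot A$: some clause has all its literals' negations in $A$. $F\land A\models_1\ell$: some clause not satisfied by $A$ becomes exactly $\{\ell\}$ after deleting literals whose negations are in $A$. Saturated masked attention with weights $\Gamma_s=(W_Q,W_K,W_V)$: let $\mathbf{A} = XW_Q(XW_K)^\top$, $\mathcal{M}_i = \{j\le i \mid \mathbf{A}_{ij} = \max_{k\le i}\mathbf{A}_{ik}\}$, and $\operatorname{SaturatedAttn}(X;\Gamma_s)_i = \frac{1}{|\mathcal{M}_i|}\sum_{j\in\mathcal{M}_i} X_jW_V$. An MLP layer with ReGLU activation computes $x\mapsto W_2[(W_1x+b_1)\otimes\operatorname{ReLU}(Vx+b_2)]+b$ at each position; $[\cdot;\cdot]$ denotes rowwise concatenation. *)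

From HB Require Import structures.
From mathcomp Require Import all_boot all_order all_algebra.
From mathcomp Require Import reals.
Set Implicit Arguments. Unset Strict Implicit. Unset Printing Implicit Defensive.
Import Order.TTheory GRing.Theory Num.Theory.
Local Open Scope ring_scope.

(** Literals over variables x_0..x_{p-1}: (v, true) is x_v, (v, false) is ~ x_v. *)
Definition lit (p : nat) : finType := ('I_p * bool)%type.

Definition lneg {p : nat} (l : lit p) : lit p := (l.1, ~~ l.2).

Definition consistent {p : nat} (B : {set lit p}) : bool :=
  [forall v : 'I_p, ~~ (((v, true) \in B) && ((v, false) \in B))].

Definition is3clause {p : nat} (C : {set lit p}) : bool :=
  consistent C && (#|C| == 3)%N.

Definition sat_clause {p : nat} (A C : {set lit p}) : bool :=
  [exists l in C, l \in A].

Definition models {p c : nat} (A : {set lit p}) (F : 'I_c -> {set lit p}) : bool :=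
  [forall i : 'I_c, sat_clause A (F i)].

Definition entails_notA {p c : nat} (F : 'I_c -> {set lit p}) (A : {set lit p}) : bool :=
  [exists i : 'I_c, [forall l in F i, lneg l \in A]].

Definition unit_entails {p c : nat} (F : 'I_c -> {set lit p}) (A : {set lit p})
  (l : lit p) : bool :=
  [exists i : 'I_c, ~~ sat_clause A (F i) &&
     ([set l' in F i | lneg l' \notin A] == [set l])].

Definition unit_set {p c : nat} (F : 'I_c -> {set lit p}) (A : {set lit p}) : {set lit p} :=
  [set l | unit_entails F A l].

(** Encoding E(B) in {0,1}^{2p}: E(B)_v = [x_v in B], E(B)_{v+p} = [~x_v in B]. *)
Definition enc {R : realType} {p : nat} (B : {set lit p}) : 'rV[R]_(p + p) :=
  \row_(j < p + p) match split j with
                   | inl v => (((v, true) \in B) : nat)%:R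
                   | inr v => (((v, false) \in B) : nat)%:R
                   end.

Definition tokrow {R : realType} {n : nat} (e : 'rV[R]_n) (a b : R) : 'rV[R]_(n + 2) :=
  row_mx e (\row_(k < 2) (if k == 0 :> nat then a else b)).

Definition inputX {R : realType} {p c : nat} (F : 'I_c -> {set lit p})
  (A : {set lit p}) : 'M[R]_(c.+2, p + p + 2) :=
  \matrix_(i < c.+2)
    if (i == 0 :> nat) then tokrow 0 1 1
    else if (insub (i.-1) : option 'I_c) is Some k then tokrow (enc (F k)) 0 1
    else tokrow (enc A) 0 1.

Definition satMask {R : realType} {n : nat} (Att : 'M[R]_n) (i : 'I_n) : {set 'I_n} :=
  [set j : 'I_n | (j <= i)%N && [forall k : 'I_n, (k <= i)%N ==> (Att i k <= Att i j)]].

Definition satAttn {R : realType} {n d dk dv : nat} (X : 'M[R]_(n, d))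
  (WQ WK : 'M[R]_(d, dk)) (WV : 'M[R]_(d, dv)) : 'M[R]_(n, dv) :=
  let Att := (X *m WQ) *m (X *m WK)^T in
  \matrix_(i < n) ((#|satMask Att i|%:R)^-1 *:
                   \sum_(j in satMask Att i) (row j X *m WV)).

Definition relu {R : realType} (x : R) : R := Num.max x 0.

Definition regluMLP {R : realType} {n m h o : nat}
  (W1 V : 'M[R]_(m, h)) (b1 b2 : 'rV[R]_h) (W2 : 'M[R]_(h, o)) (b : 'rV[R]_o)
  (Y : 'M[R]_(n, m)) : 'M[R]_(n, o) :=
  \matrix_(i < n)
    (map2_mx (fun x y => x * y) (row i Y *m W1 + b1)
             (map_mx relu (row i Y *m V + b2)) *m W2 + b).

From HB Require Import structures.
From mathcomp Require Import all_boot all_order all_algebra.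
From mathcomp Require Import reals.
From mathcomp Require Import zify.
Import Order.TTheory GRing.Theory Num.Theory.
Local Open Scope ring_scope.

(* All three heads read the last token, whose query is [E(A), 1].  Against the
   key built from integer weights (α, β, γ, x), the token encoding a literal set
   B scores α|A ∩ B| + β|¬A ∩ B| + γ|B| + x[B is the start token], where ¬A is
   the set of literals whose negation is in A; on a 3-clause C, |A ∩ C| counts
   the literals of C satisfied by A and |¬A ∩ C| those falsified by A.  The
   weights are chosen so that the maximal scores are reached exactly at the
   start token when A |= F (i), at the falsified clauses when there are any
   (ii), and at the unit clauses when no clause is falsified (iii).  In (iii)
   the head averages the encodings of the unit clauses; the ReGLU layer turns
   every positive coordinate into 1 with a clipped ramp and multiplies it by
   1 - [l ∈ ¬A], which discards the falsified literals of the unit clauses and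
   keeps exactly their unit literals. *)

Section SaturatedAttentionLastRow.
Variables (R : realType) (n d dk dv : nat).
Variables (X : 'M[R]_(n.+1, d)) (WQ WK : 'M[R]_(d, dk)) (WV : 'M[R]_(d, dv)).

Let scores := X *m WQ *m (X *m WK)^T.
Let mask := satMask scores ord_max.

Lemma scoresE i j : scores i j = (row i X *m WQ *m (row j X *m WK)^T) 0 0.
Proof. by rewrite -!row_mul !mxE; apply: eq_bigr => k _; rewrite !mxE. Qed.

Lemma satMask_ord_maxE j :
  (j \in mask) = [forall k, scores ord_max k <= scores ord_max j].
Proof. by rewrite inE leq_ord; apply: eq_forallb => k; rewrite leq_ord. Qed.

Lemma satMask_ord_max_gt0 : (0 < #|mask|)%N.
Proof.
have [j _ j_max] := @arg_maxP _ R _ ord0 xpredT (scores ord_max) isT.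
by apply/card_gt0P; exists j; rewrite satMask_ord_maxE; apply/forallP => k; apply: j_max.
Qed.

Lemma satAttn_ord_max :
  row ord_max (satAttn X WQ WK WV) = #|mask|%:R^-1 *: \sum_(j in mask) row j X *m WV.
Proof. by rewrite rowK. Qed.

Lemma satAttn_ord_max_const (th : R) (v : 'rV[R]_dv) :
  (exists j, th <= scores ord_max j) ->
  (forall j, th <= scores ord_max j -> row j X *m WV = v) ->
  row ord_max (satAttn X WQ WK WV) = v.
Proof.
move=> [j0 th_le_j0] val_v; rewrite satAttn_ord_max.
rewrite (eq_bigr (fun=> v)) => [|j]; last first.
  by rewrite satMask_ord_maxE => /forallP/(_ j0) le_j0; apply/val_v/(le_trans th_le_j0).
rewrite sumr_const -scaler_nat scalerA mulVf ?scale1r //.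
by rewrite pnatr_eq0 -lt0n satMask_ord_max_gt0.
Qed.

End SaturatedAttentionLastRow.

Arguments satAttn_ord_max_const {R n d dk dv X WQ WK WV th v}.

Lemma satAttn_ord_max_scalar (R : realType) (n d dk : nat) (X : 'M[R]_(n.+1, d))
    (WQ WK : 'M[R]_(d, dk)) (WV : 'M[R]_(d, 1)) (th v : R) :
  (exists j, th <= (X *m WQ *m (X *m WK)^T) ord_max j) ->
  (forall j, th <= (X *m WQ *m (X *m WK)^T) ord_max j -> row j X *m WV = v%:M) ->
  satAttn X WQ WK WV ord_max 0 = v.
Proof.
by move=> th_reached val_v; have /rowP/(_ 0) := satAttn_ord_max_const th_reached val_v;
  rewrite !mxE mulr1n.
Qed.

Arguments satAttn_ord_max_scalar {R n d dk X WQ WK WV} th {v}.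

Lemma lnegK (p : nat) : involutive (@lneg p).
Proof. by case=> v b; rewrite /lneg negbK. Qed.

Definition negset {p : nat} (B : {set lit p}) : {set lit p} := lneg @^-1: B.

Definition unit_clause {p : nat} (A C : {set lit p}) : bool :=
  ~~ sat_clause A C && (#|[set l in C | lneg l \notin A]| == 1)%N.

Section ClauseCounting.
Variables (p : nat) (A C : {set lit p}).

Lemma card_setI_negset : #|A :&: negset C| = #|negset A :&: C|.
Proof.
rewrite -(card_preimset _ (can_inj (@lnegK p))) preimsetI.
by congr #|_ :&: _|; apply/setP => l; rewrite !inE lnegK.
Qed.

Lemma sat_clauseE : sat_clause A C = (0 < #|A :&: C|)%N.
Proof.
apply/existsP/card_gt0P => [[l /andP [lC lA]]|[l]]; first by exists l; rewrite inE lA.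
by rewrite inE => /andP [lA lC]; exists l; rewrite lC.
Qed.

Lemma falsifiedE :
  [forall l in C, lneg l \in A] = (#|negset A :&: C| == #|C|)%N.
Proof.
rewrite (subset_leqif_cards (subsetIr (negset A) C)) eqEsubset subsetIr /=.
apply/forallP/subsetP => [falsC l lC | sub l]; last first.
  by apply/implyP => /sub; rewrite !inE => /andP [].
by rewrite !inE lC andbT; apply: (implyP (falsC l)).
Qed.

Lemma card_unfalsified :
  #|[set l in C | lneg l \notin A]| = (#|C| - #|negset A :&: C|)%N.
Proof.
by rewrite setIC -cardsD; apply: eq_card => l; rewrite !inE andbC.
Qed.

Lemma unit_clauseE :
  unit_clause A C = (#|A :&: C| == 0)%N && (#|C| - #|negset A :&: C| == 1)%N.
Proof. by rewrite /unit_clause sat_clauseE card_unfalsified -leqNgt leqn0. Qed.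

Hypothesis consA : consistent A.

Lemma consistent_lneg l : l \in A -> lneg l \notin A.
Proof.
move: consA => /forallP /(_ l.1); case: l => v [] /= noboth lA;
  by apply/negP => lnA; move: noboth; rewrite lA lnA.
Qed.

Lemma setI_negset : A :&: negset A = set0.
Proof.
apply/setP => l; rewrite !inE; apply/negbTE/negP => /andP [lA nlA].
by move: (consistent_lneg _ lA); rewrite nlA.
Qed.

Lemma card_sat_falsified_le : (#|A :&: C| + #|negset A :&: C| <= #|C|)%N.
Proof.
rewrite -cardsUI setIACA setI_negset set0I cards0 addn0.
by apply/subset_leq_card; rewrite -setIUl subsetIr.
Qed.

End ClauseCounting.

Arguments setI_negset {p A}.
Arguments card_sat_falsified_le {p A} C.

Lemma card_3clause {p : nat} {C : {set lit p}} : is3clause C -> #|C| = 3%N.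
Proof. by case/andP => _ /eqP. Qed.

Lemma unit_setE (p c : nat) (F : 'I_c -> {set lit p}) (A : {set lit p}) l :
  (l \in unit_set F A)
  = (lneg l \notin A) && [exists k, unit_clause A (F k) && (l \in F k)].
Proof.
rewrite inE; apply/existsP/andP => [[k /andP [unsat /eqP unitE]] | ].
  have : l \in [set l' in F k | lneg l' \notin A] by rewrite unitE set11.
  rewrite inE => /andP [lF nlA]; split=> //; apply/existsP; exists k.
  by rewrite /unit_clause unsat unitE cards1 lF.
move=> [nlA /existsP [k /andP [/andP [unsat /cards1P [l' l'E]] lF]]].
exists k; rewrite unsat l'E; apply/eqP; congr [set _].
have : l \in [set l' in F k | lneg l' \notin A] by rewrite inE lF nlA.
by rewrite l'E inE => /eqP.
Qed.

Section CountingSums.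
Variables (R : pzSemiRingType) (T : finType).

Lemma natr_card (S : {set T}) : #|S|%:R = \sum_x (x \in S)%:R :> R.
Proof. by rewrite -sum1_card natr_sum big_mkcond; apply: eq_bigr => x _; case: (x \in S). Qed.

Lemma sum_indicator (M : {set T}) (P : pred T) :
  \sum_(x in M) (P x)%:R = #|[set x in M | P x]|%:R :> R.
Proof.
rewrite natr_card big_mkcond; apply: eq_bigr => x _.
by rewrite inE; case: (x \in M).
Qed.

End CountingSums.

Section LiteralEncoding.
Variables (R : realType) (p : nat).
Local Notation E := (@enc R p).

Definition lit_of_index (j : 'I_(p + p)) : lit p :=
  match split j with inl v => (v, true) | inr v => (v, false) end.

Lemma encE B j : E B 0 j = (lit_of_index j \in B)%:R.
Proof. by rewrite mxE /lit_of_index; case: split. Qed.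

Lemma sum_lit_of_index (f : lit p -> R) :
  \sum_(j < p + p) f (lit_of_index j) = \sum_l f l.
Proof.
have -> : \sum_l f l = \sum_(v < p) \sum_(b : bool) f (v, b).
  by rewrite pair_big; apply: eq_bigr => -[].
rewrite big_split_ord /= -big_split /=; apply: eq_bigr => v _.
by rewrite big_bool /lit_of_index (unsplitK (inl v)) (unsplitK (inr v)).
Qed.

Lemma enc_dot B B' : (E B *m (E B')^T) 0 0 = #|B :&: B'|%:R.
Proof.
rewrite mxE natr_card -sum_lit_of_index; apply: eq_bigr => j _.
by rewrite [X in _ * X]mxE !encE inE -natrM mulnb.
Qed.

Lemma enc_sum B : (E B *m (const_mx 1 : 'cV_(p + p))) 0 0 = #|B|%:R.
Proof.
rewrite mxE natr_card -sum_lit_of_index; apply: eq_bigr => j _.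
by rewrite [X in _ * X]mxE encE mulr1.
Qed.

Definition swap_mx : 'M[R]_(p + p) :=
  \matrix_(i, j) (lit_of_index i == lneg (lit_of_index j))%:R.

Lemma enc_swap B : E B *m swap_mx = E (negset B).
Proof.
apply/rowP => j; rewrite mxE encE inE.
transitivity (\sum_l (l \in B)%:R * (l == lneg (lit_of_index j))%:R : R).
  by rewrite -sum_lit_of_index; apply: eq_bigr => i _; rewrite encE mxE.
rewrite (bigD1 (lneg (lit_of_index j))) //= eqxx mulr1 big1 ?addr0 // => l.
by move/negbTE ->; rewrite mulr0.
Qed.

End LiteralEncoding.

Arguments lit_of_index {p}.

Definition col2 {R : realType} (x y : R) : 'cV[R]_2 :=
  \col_(k < 2) (if k == 0 :> nat then x else y).

Section TokenArithmetic.
Variables (R : realType) (n : nat).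

Lemma pair_mul_col2 (a b x y : R) :
  (\row_(k < 2) (if k == 0 :> nat then a else b)) *m col2 x y = (a * x + b * y)%:M.
Proof.
by apply/rowP => i; rewrite ord1 !mxE !big_ord_recl big_ord0 !mxE /= addr0 mulr1n.
Qed.

Lemma tokrow_mul_block (e : 'rV[R]_n) a b m (K : 'M_(n, m)) (k : 'cV_n) x y :
  tokrow e a b *m block_mx K k 0 (col2 x y)
  = row_mx (e *m K) (e *m k + (a * x + b * y)%:M).
Proof. by rewrite /tokrow mul_row_block mulmx0 addr0 pair_mul_col2. Qed.

Lemma query_key_score (eA e : 'rV[R]_n) a (K : 'M_n) (k : 'cV_n) x :
  (tokrow eA 0 1 *m block_mx 1%:M 0 0 (col2 0 1)
     *m (tokrow e a 1 *m block_mx K k 0 (col2 x 0))^T) 0 0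
  = (eA *m (e *m K)^T) 0 0 + (e *m k) 0 0 + a * x.
Proof.
rewrite !tokrow_mul_block mulmx1 mulmx0 add0r tr_row_mx mul_row_col.
rewrite mul0r add0r mulr1 mulr0 addr0 mul1mx linearD /= tr_scalar_mx.
rewrite ![((_ + _) : 'M_1) 0 0]mxE [((_^T) : 'M_1) 0 0]mxE.
by rewrite [((_%:M) : 'M_1) 0 0]mxE mulr1n addrA.
Qed.

End TokenArithmetic.

Section InputMatrix.
Variables (R : realType) (p c : nat).

Definition Wq : 'M[R]_(p + p + 2, p + p + 1) := block_mx 1%:M 0 0 (col2 0 1).

Definition Wk (α β γ x : int) : 'M[R]_(p + p + 2, p + p + 1) :=
  block_mx (α%:~R%:M + β%:~R *: swap_mx R p) (γ%:~R *: const_mx 1) 0 (col2 x%:~R 0).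

Variables (F : 'I_c -> {set lit p}) (A : {set lit p}).
Local Notation X := (@inputX R p c F A).
Local Notation E := (@enc R p).

Definition token_set (j : 'I_c.+2) : {set lit p} :=
  if j == 0 :> nat then set0 else if insub j.-1 is Some k then F k else A.

Lemma row_inputX j : row j X = tokrow (E (token_set j)) (j == ord0)%:R 1.
Proof.
rewrite rowK /token_set -[j == 0 :> nat]/(j == ord0); case: (j == ord0) => /=.
  by congr tokrow; apply/rowP => i; rewrite encE inE mxE.
by case: insub.
Qed.

Variant token_spec (j : 'I_c.+2) : {set lit p} -> bool -> Type :=
  | TokenStart : token_spec j set0 true
  | TokenClause k : token_spec j (F k) false
  | TokenAssignment : token_spec j A false.

Lemma tokenP j : token_spec j (token_set j) (j == ord0).
Proof.
rewrite /token_set -[j == 0 :> nat]/(j == ord0).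
by case: (j == ord0); [constructor | case: insub => [k|]; constructor].
Qed.

Lemma token_set0 : token_set ord0 = set0.
Proof. by []. Qed.

Lemma token_set_ord_max : token_set ord_max = A.
Proof. by rewrite /token_set /=; case: insubP => // k; rewrite ltnn. Qed.

Definition clause_row (k : 'I_c) : 'I_c.+2 := lift ord0 (widen_ord (leqnSn c) k).

Lemma clause_row_neq0 k : (clause_row k == ord0) = false.
Proof. by rewrite eq_sym (negbTE (neq_lift _ _)). Qed.

Lemma token_set_clause_row k : token_set (clause_row k) = F k.
Proof.
rewrite /token_set /=; case: insubP => [k' _ /= k'E|]; last by rewrite ltn_ord.
by congr F; apply: val_inj.
Qed.

Lemma scoreE α β γ x j :
  (X *m Wq *m (X *m Wk α β γ x)^T) ord_max j
  = (α * #|A :&: token_set j|%:Z + β * #|negset A :&: token_set j|%:Z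
     + γ * #|token_set j|%:Z + x * (j == ord0)%:Z)%:~R.
Proof.
rewrite scoresE !row_inputX token_set_ord_max query_key_score.
rewrite mulmxDr mul_mx_scalar -!scalemxAr enc_swap linearD !linearZ /= mulmxDr.
rewrite -!scalemxAr [((_ + _) : 'M_1) 0 0]mxE ![((_ *: _) : 'M_1) 0 0]mxE.
by rewrite !enc_dot enc_sum card_setI_negset !rmorphD !rmorphM /= (mulrC _ x%:~R).
Qed.

Definition Wv_start (a b : R) : 'M[R]_(p + p + 2, 1) := col_mx 0 (col2 a b).

Lemma row_inputX_Wv_start a b j :
  row j X *m Wv_start a b = ((j == ord0)%:R * a + b)%:M.
Proof. by rewrite row_inputX /tokrow mul_row_col mulmx0 add0r pair_mul_col2 mul1r. Qed.

Definition Wv_lits : 'M[R]_(p + p + 2, p + p) := col_mx 1%:M 0.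

Lemma row_inputX_Wv_lits j : row j X *m Wv_lits = E (token_set j).
Proof. by rewrite row_inputX /tokrow mul_row_col mulmx1 mulmx0 addr0. Qed.

End InputMatrix.

Arguments clause_row {c}.
Arguments token_set {p c} F A j.
Arguments tokenP {p c F A} j.

Section GatedRamp.
Variables (R : realType) (p : nat).

Definition W1_gate : 'M[R]_(p + p + (p + p + 2), (p + p) + (p + p)) :=
  col_mx 0 (col_mx (row_mx (- swap_mx R p) (- swap_mx R p)) 0).
Definition b1_gate : 'rV[R]_((p + p) + (p + p)) := row_mx (const_mx 1) (const_mx 1).
Definition V_ramp (K : R) : 'M[R]_(p + p + (p + p + 2), (p + p) + (p + p)) :=
  col_mx (row_mx K%:M K%:M) 0.
Definition b2_ramp : 'rV[R]_((p + p) + (p + p)) := row_mx 0 (const_mx (-1)).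
Definition W2_diff : 'M[R]_((p + p) + (p + p), p + p) := col_mx 1%:M (-1)%:M.

Lemma row_regluMLP_gated_ramp n (K : R) (Y : 'M[R]_(n, p + p + (p + p + 2))) i o e a b :
  row i Y = row_mx o (tokrow e a b) ->
  row i (regluMLP W1_gate (V_ramp K) b1_gate b2_ramp W2_diff 0 Y)
  = \row_l ((1 - (e *m swap_mx R p) 0 l) * (relu (K * o 0 l) - relu (K * o 0 l - 1))).
Proof.
move=> rowYi; rewrite rowK rowYi addr0 /W1_gate /b1_gate /V_ramp /b2_ramp /W2_diff.
rewrite !mul_row_col !mulmx0 !add0r !addr0 !mul_mx_row !add_row_mx map_row_mx map2_row_mx.
rewrite mul_row_col !mul_mx_scalar scale1r scaleN1r mulmxN.
by apply/rowP => l; rewrite !mxE addr0 (addrC (- _) 1) mulrBr.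
Qed.

Lemma relu_ramp_frac (K : R) (a b : nat) : (0 < b)%N -> b%:R <= K ->
  relu (K * (a%:R / b%:R)) - relu (K * (a%:R / b%:R) - 1) = (0 < a)%N%:R.
Proof.
move=> b_gt0 b_le_K; have b_pos : (0 : R) < b%:R by rewrite ltr0n.
case: a => [|a]; first by rewrite mul0r mulr0 /relu add0r maxxx max_r ?lerN10 ?subrr.
have ge1 : 1 <= K * (a.+1%:R / b%:R).
  rewrite mulrA ler_pdivlMr // mul1r (le_trans b_le_K) // ler_peMr ?ler1n //.
  exact: le_trans (ltW b_pos) b_le_K.
rewrite /relu !max_l ?subr_ge0 ?(le_trans ler01) //.
by rewrite opprB addrC subrK.
Qed.

End GatedRamp.

Arguments row_regluMLP_gated_ramp {R p n K Y i o e a b}.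

Section Heads.
Variables (R : realType) (p c : nat) (F : 'I_c -> {set lit p}) (A : {set lit p}).
Hypotheses (F3 : forall k, is3clause (F k)) (consA : consistent A).
Local Notation X := (@inputX R p c F A).

(* Scores: 2 at the start token, 3 - 4|A :&: C| at a clause C, -3|A| at A itself. *)
Lemma models_head :
  satAttn X (Wq R p) (Wk R p (-4) 0 1 2) (Wv_start R p 1 0) ord_max 0 = (models A F)%:R.
Proof.
have [modelsAF | /forallPn [k unsat_k]] := boolP (models A F).
  apply: (satAttn_ord_max_scalar 2%:~R).
    by exists ord0; rewrite scoreE token_set0 !setI0 !cards0.
  move=> j; rewrite scoreE ler_int row_inputX_Wv_start.
  case: (tokenP j) => [|k|] le_score; first by rewrite mulr1 addr0.
    exfalso; move: le_score (forallP modelsAF k).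
    by rewrite sat_clauseE (card_3clause (F3 k)); lia.
  by exfalso; move: le_score; rewrite setIid; lia.
apply: (satAttn_ord_max_scalar 3%:~R).
  exists (clause_row k); rewrite scoreE clause_row_neq0 token_set_clause_row.
  by move: unsat_k; rewrite sat_clauseE (card_3clause (F3 k)) lt0n negbK => /eqP ->.
move=> j; rewrite scoreE ler_int row_inputX_Wv_start.
case: (tokenP j) => [|k'|] le_score; rewrite ?mul0r ?addr0 //.
by move: le_score; rewrite !setI0 !cards0.
Qed.

(* Scores: 5 at the start token, twice the number of literals of C falsified by A
   at a clause C, 0 at A itself. *)
Lemma entails_head :
  satAttn X (Wq R p) (Wk R p 0 2 0 5) (Wv_start R p (-1) 1) ord_max 0
  = (entails_notA F A)%:R.
Proof.
have [/existsP [k falsified_k] | not_entails] := boolP (entails_notA F A).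
  apply: (satAttn_ord_max_scalar 6%:~R).
    exists (clause_row k); rewrite scoreE clause_row_neq0 token_set_clause_row.
    by move: falsified_k; rewrite falsifiedE (card_3clause (F3 k)) => /eqP ->.
  move=> j; rewrite scoreE ler_int row_inputX_Wv_start.
  case: (tokenP j) => [|k'|] le_score; rewrite ?mul0r ?add0r //.
  by move: le_score; rewrite !setI0 !cards0.
apply: (satAttn_ord_max_scalar 5%:~R).
  by exists ord0; rewrite scoreE token_set0 !setI0 !cards0.
move=> j; rewrite scoreE ler_int row_inputX_Wv_start.
case: (tokenP j) => [|k|] le_score; first by rewrite mul1r addNr.
  exfalso; move: le_score (card_sat_falsified_le (F k) consA) (existsPn not_entails k).
  by rewrite falsifiedE (card_3clause (F3 k)); lia.
by move: le_score; rewrite (setIC (negset A)) (setI_negset consA) !cards0.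
Qed.

Let unit_mask := satMask (X *m Wq R p *m (X *m Wk R p (-4) 2 0 3)^T) ord_max.

(* Scores: 3 at the start token, 2N - 4I at a clause with I satisfied and N
   falsified literals (4 for unit clauses, at most 2 for the others as long as
   no clause is falsified), -4|A| at A itself. *)
Lemma unit_mask_support l : ~~ entails_notA F A ->
  (0 < #|[set j in unit_mask | l \in token_set F A j]|)%N
  = [exists k, unit_clause A (F k) && (l \in F k)].
Proof.
move=> not_entails.
have bounds k : (#|A :&: F k| + #|negset A :&: F k| <= 3)%N /\ (#|negset A :&: F k| != 3)%N.
  rewrite -(card_3clause (F3 k)) -falsifiedE (existsPn not_entails k).
  by split; first exact: card_sat_falsified_le.
apply/card_gt0P/existsP => [[j] | [k /andP [unit_k l_k]]].
  rewrite inE satMask_ord_maxE => /andP [/forallP /(_ ord0)].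
  rewrite !scoreE token_set0 eqxx !setI0 !cards0 ler_int.
  case: (tokenP j) => [|k|] le_score l_j; first by rewrite inE in l_j.
    exists k; rewrite l_j andbT unit_clauseE (card_3clause (F3 k)).
    by have [le3 ne3] := bounds k; apply/andP; split; apply/eqP; lia.
  by move: le_score; rewrite setIid (setIC (negset A)) (setI_negset consA) cards0; lia.
exists (clause_row k); rewrite inE token_set_clause_row l_k andbT satMask_ord_maxE.
move: unit_k; rewrite unit_clauseE (card_3clause (F3 k)) => /andP [/eqP sat0 /eqP unsat1].
apply/forallP => j; rewrite !scoreE ler_int clause_row_neq0 token_set_clause_row.
case: (tokenP j) => [|k'|]; first by rewrite !setI0 !cards0; lia.
  by have := bounds k'; lia.
by rewrite setIid (setIC (negset A)) (setI_negset consA) cards0; lia.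
Qed.

Lemma unit_head_attnE l :
  row ord_max (satAttn X (Wq R p) (Wk R p (-4) 2 0 3) (Wv_lits R p)) 0 l
  = #|[set j in unit_mask | lit_of_index l \in token_set F A j]|%:R / #|unit_mask|%:R.
Proof.
rewrite satAttn_ord_max mxE summxE mulrC -sum_indicator; congr (_ * _).
by apply: eq_bigr => j _; rewrite row_inputX_Wv_lits encE.
Qed.

(* Each nonzero entry of the attention output is at least 1 / #|unit_mask|
   >= 1 / (c + 2), so the ramp of slope c + 2 saturates it to 1. *)
Lemma unit_propagation_head : ~~ entails_notA F A ->
  row ord_max (regluMLP (W1_gate R p) (V_ramp R p c.+2%:R) (b1_gate R p) (b2_ramp R p)
                 (W2_diff R p) 0
                 (row_mx (satAttn X (Wq R p) (Wk R p (-4) 2 0 3) (Wv_lits R p)) X))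
  = enc (unit_set F A).
Proof.
move=> not_entails; set S := satAttn _ _ _ _.
have rowY : row ord_max (row_mx S X) = row_mx (row ord_max S) (tokrow (enc A) 0 1).
  by rewrite row_row_mx row_inputX token_set_ord_max.
rewrite (row_regluMLP_gated_ramp rowY) enc_swap; apply/rowP => l.
rewrite mxE !encE unit_setE inE unit_head_attnE relu_ramp_frac ?satMask_ord_max_gt0 //.
  rewrite unit_mask_support //.
  by case: (_ \in A); case: [exists _, _]; rewrite /= ?subrr ?mul0r ?subr0 ?mul1r.
by rewrite ler_nat (leq_trans (max_card _)) ?card_ord.
Qed.

End Heads.

Theorem mainTheorem3 (R : realType) (p c : nat) :
  (* (i) *)
  (exists (dk : nat) (WQ WK : 'M[R]_(p + p + 2, dk)) (WV : 'M[R]_(p + p + 2, 1)),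
     forall (F : 'I_c -> {set lit p}) (A : {set lit p}),
       (forall k, is3clause (F k)) -> consistent A ->
       satAttn (inputX F A) WQ WK WV ord_max 0 = (models A F : nat)%:R) /\
  (* (ii) *)
  (exists (dk : nat) (WQ WK : 'M[R]_(p + p + 2, dk)) (WV : 'M[R]_(p + p + 2, 1)),
     forall (F : 'I_c -> {set lit p}) (A : {set lit p}),
       (forall k, is3clause (F k)) -> consistent A ->
       satAttn (inputX F A) WQ WK WV ord_max 0 = (entails_notA F A : nat)%:R) /\
  (* (iii) *)
  (exists (dk : nat) (WQ WK : 'M[R]_(p + p + 2, dk)) (WV : 'M[R]_(p + p + 2, p + p))
          (h : nat) (W1 V : 'M[R]_(p + p + (p + p + 2), h)) (b1 b2 : 'rV[R]_h)
          (W2 : 'M[R]_(h, p + p)) (b : 'rV[R]_(p + p)),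
     forall (F : 'I_c -> {set lit p}) (A : {set lit p}),
       (forall k, is3clause (F k)) -> consistent A ->
       ~~ entails_notA F A ->
       row ord_max (regluMLP W1 V b1 b2 W2 b
                      (row_mx (satAttn (inputX F A) WQ WK WV) (inputX F A)))
         = enc (unit_set F A)).
Proof.
split; last split.
- by exists _, (Wq R p), (Wk R p (-4) 0 1 2), (Wv_start R p 1 0) => F A; apply: models_head.
- by exists _, (Wq R p), (Wk R p 0 2 0 5), (Wv_start R p (-1) 1) => F A; apply: entails_head.
- exists _, (Wq R p), (Wk R p (-4) 2 0 3), (Wv_lits R p), _, (W1_gate R p),
    (V_ramp R p c.+2%:R), (b1_gate R p), (b2_ramp R p), (W2_diff R p), 0.
  by move=> F A; apply: unit_propagation_head.
Qed.
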